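(* Let $R$ be a commutative ring with unit. If a discrete group $G$ has periodic cohomology over $R$ starting in dimension $k+1$, then $G$ has jump cohomology of height $k$ over $R$, i.e. every subgroup $H\le G$ with $cd_R(H)<\infty$ satisfies $cd_R(H)\le k$.
   Context: $cd_R(G)=\inf\{n:\operatorname{Ext}^i_{RG}(R,-)=0 \text{ for } i>n\}$. $G$ has periodic cohomology over $R$ starting in dimension $n$ if there is $\alpha\in\operatorname{Ext}^*_{RG}(R,R)$ with $|\alpha|>0$ such that $\alpha\cup-:\operatorname{Ext}^i_{RG}(R,M)\to\operatorname{Ext}^{i+|\alpha|}_{RG}(R,M)$ is an isomorphism for every $RG$-module $M$ and every $i\ge n$. $G$ has jump cohomology of height $k$ over $R$ if every subgroup $H$ with $cd_R(H)<\infty$ has $cd_R(H)\le k$. *)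

(* Group cohomology of a discrete (possibly infinite) group
   via the standard inhomogeneous cochain complex:
   Ext^i_{RG}(R, M) = H^i(G; M). *)
From HB Require Import structures.
From mathcomp Require Import all_boot all_algebra.
Set Implicit Arguments. Unset Strict Implicit. Unset Printing Implicit Defensive.
Import GRing.Theory.
Local Open Scope ring_scope.

Record group := Group {
  gcar :> Type;
  gmul : gcar -> gcar -> gcar;
  ginv : gcar -> gcar;
  gone : gcar;
  gmulA : forall x y z, gmul x (gmul y z) = gmul (gmul x y) z;
  gmul1 : forall x, gmul gone x = x;
  gmulV : forall x, gmul (ginv x) x = gone
}.

Definition is_subgroup (G : group) (H : G -> Prop) : Prop :=
  [/\ H (gone G), (forall x y, H x -> H y -> H (gmul x y))
    & (forall x, H x -> H (ginv x))].

Definition whole (G : group) : G -> Prop := fun _ => True.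

Definition all_in (G : group) (H : G -> Prop) (s : seq G) : Prop :=
  forall i, (i < size s)%N -> H (nth (gone G) s i).

Definition gprod (G : group) (s : seq G) : G := foldr (@gmul G) (gone G) s.

Definition is_module_action (R : comPzRingType) (G : group) (H : G -> Prop)
  (M : lmodType R) (act : G -> M -> M) : Prop :=
  [/\ (forall g a (x y : M), H g -> act g (a *: x + y) = a *: act g x + act g y),
      (forall x, act (gone G) x = x)
    & (forall g h x, H g -> H h -> act (gmul g h) x = act g (act h x))].

Definition merge_at (G : group) (i : nat) (s : seq G) : seq G :=
  take i s ++ gmul (nth (gone G) s i) (nth (gone G) s i.+1) :: drop i.+2 s.

(* standard coboundary of an inhomogeneous cochain f : G^n -> M,
   evaluated at s = (g1, ..., g_{n+1}) *)
Definition dcob (R : comPzRingType) (G : group) (M : lmodType R)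
  (act : G -> M -> M) (f : seq G -> M) (s : seq G) : M :=
  match s with
  | [::] => 0
  | g :: t =>
      act g (f t)
      + \sum_(i < (size s).-1) ((-1) ^+ i.+1) *: f (merge_at i s)
      + ((-1) ^+ size s) *: f (take (size s).-1 s)
  end.

Definition cocycle (R : comPzRingType) (G : group) (H : G -> Prop)
  (M : lmodType R) (act : G -> M -> M) (n : nat) (f : seq G -> M) : Prop :=
  forall s, size s = n.+1 -> all_in H s -> dcob act f s = 0.

Definition coboundary (R : comPzRingType) (G : group) (H : G -> Prop)
  (M : lmodType R) (act : G -> M -> M) (n : nat) (f : seq G -> M) : Prop :=
  match n with
  | 0 => f [::] = 0
  | _.+1 => exists h : seq G -> M,
      forall s, size s = n -> all_in H s -> f s = dcob act h s
  end.

Definition coh_vanishes (R : comPzRingType) (G : group) (H : G -> Prop)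
  (M : lmodType R) (act : G -> M -> M) (n : nat) : Prop :=
  forall f, cocycle H act n f -> coboundary H act n f.

Definition cd_le (R : comPzRingType) (G : group) (H : G -> Prop) (k : nat) : Prop :=
  forall (M : lmodType R) (act : G -> M -> M), is_module_action H act ->
  forall i, (k < i)%N -> coh_vanishes H act i.

Definition cd_finite (R : comPzRingType) (G : group) (H : G -> Prop) : Prop :=
  exists k, cd_le R H k.

Definition triv_act (R : comPzRingType) (G : group) : G -> R^o -> R^o :=
  fun _ x => x.

Definition cup (R : comPzRingType) (G : group) (M : lmodType R)
  (act : G -> M -> M) (q : nat) (alpha : seq G -> R) (f : seq G -> M) :
  seq G -> M :=
  fun s => alpha (take q s) *: act (gprod (take q s)) (f (drop q s)).

(* alpha u - : H^i(G;M) -> H^{i+q}(G;M) is a bijection *)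
Definition cup_iso (R : comPzRingType) (G : group) (M : lmodType R)
  (act : G -> M -> M) (q : nat) (alpha : seq G -> R) (i : nat) : Prop :=
  (forall f, cocycle (@whole G) act i f ->
     coboundary (@whole G) act (i + q) (cup act q alpha f) ->
     coboundary (@whole G) act i f)
  /\
  (forall z, cocycle (@whole G) act (i + q) z ->
     exists f, cocycle (@whole G) act i f /\
       coboundary (@whole G) act (i + q) (fun s => z s - cup act q alpha f s)).

Definition periodic_from (R : comPzRingType) (G : group) (n : nat) : Prop :=
  exists (q : nat) (alpha : seq G -> R),
    (0 < q)%N /\ cocycle (@whole G) (@triv_act R G) q alpha /\
    forall (M : lmodType R) (act : G -> M -> M),
      is_module_action (@whole G) act ->
      forall i, (n <= i)%N -> cup_iso act q alpha i.

Definition jump_height (R : comPzRingType) (G : group) (k : nat) : Prop :=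
  forall H : G -> Prop, is_subgroup H -> cd_finite R H -> cd_le R H k.

(* Let H <= G with cd_R H = n finite and let M be an RH-module.  By Shapiro's
   lemma H^i(H; M) = H^i(G; CoInd M).  For i > k, cupping with the periodicity
   class alpha (of degree q > 0) is injective on H^i(G; CoInd M), so iterating
   moves any class into degrees above n, where it vanishes; hence
   H^i(H; M) = 0 for every i > k.

   Only the two halves of Shapiro's lemma that the argument needs are proved,
   with explicit cochains: a cocycle on H lifts to a CoInd M-valued cocycle on
   G whose value at 1 recovers it, and a CoInd M-valued cocycle on G is a
   coboundary as soon as its value at 1, a cocycle on H, is one.  The latter is done on homogeneous
   cochains, with the prism homotopy between the identity and the H-equivariant
   retraction x |-> hpart x of G onto H given by a choice of coset
   representatives. *)

From HB Require Import structures.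
From mathcomp Require Import all_boot all_algebra ssrAC.
From mathcomp Require Import boolp zify.
From Stdlib Require Import ClassicalEpsilon.
Set Implicit Arguments. Unset Strict Implicit. Unset Printing Implicit Defensive.
Import GRing.Theory.
Local Open Scope ring_scope.

Lemma subrBC (V : zmodType) (a b c d : V) : (a - b) - (c - d) = (a - c) - (b - d).
Proof. by rewrite !opprB addrACA [RHS]addrACA (addrC (- b)). Qed.

Section HomogeneousCochains.
Variable X : Type.

Definition face (i : nat) (y : seq X) : seq X := take i y ++ drop i.+1 y.

Fixpoint hcob (V : zmodType) (P : seq X -> V) (y : seq X) : V :=
  if y is a :: y' then P y' - hcob (fun z => P (a :: z)) y' else 0.

(* prism eta P (y_0, ..., y_n)
     = \sum_i (-1)^i P (eta y_0, ..., eta y_i, y_i, ..., y_n),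
   the standard chain homotopy between the identity and the map induced by eta. *)
Fixpoint prism (eta : X -> X) (V : zmodType) (P : seq X -> V) (y : seq X) : V :=
  if y is a :: y' then P (eta a :: a :: y') - prism eta (fun z => P (eta a :: z)) y'
  else 0.

Section Additive.
Variable V : zmodType.
Implicit Types (P : seq X -> V) (eta : X -> X).

Lemma eq_hcob n P1 P2 : {in [pred z | size z == n], P1 =1 P2} ->
  {in [pred y | size y == n.+1], hcob P1 =1 hcob P2}.
Proof.
elim: n P1 P2 => [|n IH] P1 P2 E [|a y] //= /eqP[/eqP Hy].
  by case: y Hy => // _; rewrite E.
rewrite E ?inE //; congr (_ - _); apply: IH => // z /eqP Hz.
by apply: E; rewrite inE /= Hz.
Qed.

Lemma hcob_morph (W : zmodType) (f : V -> W) P y : {morph f : u v / u - v} ->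
  hcob (f \o P) y = f (hcob P y).
Proof.
move=> fB; have f0 : f 0 = 0 by rewrite -(subrr 0) fB subrr.
by elim: y P => [|a y IH] P //=; rewrite (IH (fun z => P (a :: z))) fB.
Qed.

Lemma hcobB P1 P2 y : hcob (fun z => P1 z - P2 z) y = hcob P1 y - hcob P2 y.
Proof.
elim: y P1 P2 => [|a y IH] P1 P2 /=; first by rewrite subrr.
by rewrite (IH (fun z => P1 (a :: z))) subrBC.
Qed.

Lemma hcobN P y : hcob (fun z => - P z) y = - hcob P y.
Proof. by rewrite -(@hcob_morph _ -%R) // => u v; exact: opprD. Qed.

Lemma hcobD P1 P2 y : hcob (fun z => P1 z + P2 z) y = hcob P1 y + hcob P2 y.
Proof.
rewrite -[hcob P2 y]opprK -hcobN -hcobB.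
by congr hcob; apply: funext => z; rewrite opprK.
Qed.

Lemma hcob_map (m : X -> X) P y : hcob (fun z => P (map m z)) y = hcob P (map m y).
Proof. by elim: y P => [|a y IH] P //=; rewrite -(IH (fun z => P (m a :: z))). Qed.

Lemma prismB eta P1 P2 y :
  prism eta (fun z => P1 z - P2 z) y = prism eta P1 y - prism eta P2 y.
Proof.
elim: y P1 P2 => [|a y IH] P1 P2 /=; first by rewrite subrr.
by rewrite (IH (fun z => P1 (eta a :: z))) subrBC.
Qed.

Lemma hcob_prism eta P y :
  hcob (prism eta P) y + prism eta (hcob P) y = P y - P (map eta y).
Proof.
elim: y P => [|a y IH] P /=; first by rewrite subrr addr0.
set Pe := fun z => P (eta a :: z).
rewrite hcobB (_ : prism eta (fun z => hcob P (eta a :: z)) y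
                  = prism eta P y - prism eta (hcob Pe) y); last by rewrite -prismB.
have := IH Pe; rewrite /Pe.
move: (hcob (prism _ _) y) (prism _ (hcob _) y) => A B AB.
rewrite !opprB !addrA (@GRing.add V).[ACl (1*8)*(3*5)*4*2*7*6] subrr addNr !add0r.
by rewrite -(addrA _ A) AB addrA addrAC addrK.
Qed.


Lemma prism_eq0 eta n P : {in [pred z | size z == n.+1], P =1 fun=> 0} ->
  {in [pred y | size y == n], prism eta P =1 fun=> 0}.
Proof.
elim: n P => [|n IH] P P0 [|a y] //= /eqP[/eqP Hy].
rewrite P0 ?inE /= ?Hy // IH ?subrr // => z /eqP Hz.
by rewrite P0 // inE /= Hz.
Qed.

Lemma prism_map (W : zmodType) eta (m : X -> X) (f : V -> W) (P1 : seq X -> W) P2 :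
  {morph f : u v / u - v} -> eta \o m =1 m \o eta ->
  (forall z, z <> [::] -> P1 (map m z) = f (P2 z)) ->
  forall y, prism eta P1 (map m y) = f (prism eta P2 y).
Proof.
move=> fB eta_m; have f0 : f 0 = 0 by rewrite -(subrr 0) fB subrr.
move=> P12 y; elim: y P1 P2 P12 => [|a y IH] P1 P2 P12 //=.
rewrite fB -(P12 (eta a :: a :: y)) // -[eta (m a)]/((eta \o m) a) eta_m.
by rewrite (IH _ (fun z => P2 (eta a :: z))) // => z _; rewrite -P12.
Qed.

End Additive.

Lemma hcob_cons (V : zmodType) (P : seq X -> V) a y :
  hcob P (a :: y) = P y - hcob (fun z => P (a :: z)) y.
Proof. by []. Qed.

Section Linear.
Variables (R : pzRingType) (V : lmodType R).

Lemma hcobE (P : seq X -> V) y :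
  hcob P y = \sum_(i < size y) (-1) ^+ i *: P (face i y).
Proof.
elim: y P => [|a y IH] P /=; first by rewrite big_ord0.
rewrite big_ord_recl expr0 scale1r /face /= drop0 IH -sumrN.
by congr (_ + _); apply: eq_bigr => i _; rewrite exprS mulN1r scaleNr.
Qed.

Lemma hcob_leibniz q (A : seq X -> R) (B : seq X -> V) y : (q.+1 < size y)%N ->
  hcob (fun z => A (take q.+1 z) *: B (drop q z)) y
  = hcob A (take q.+2 y) *: B (drop q.+1 y)
    + (-1) ^+ q *: (A (take q.+1 y) *: hcob B (drop q y)).
Proof.
elim: q A y => [|q IH] A [|a [|b y]] // Hs; rewrite hcob_cons.
  set Ba := hcob (fun z => B (a :: z)) (b :: y).
  have -> : hcob (fun z => A (take 1 (a :: z)) *: B (drop 0 (a :: z))) (b :: y)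
            = A [:: a] *: Ba.
    rewrite -hcob_morph; last exact: scalerBr.
    by congr hcob; apply: funext => z /=; rewrite take0.
  have -> : hcob A (take 2 [:: a, b & y]) = A [:: b] - A [:: a] by rewrite /= take0 subr0.
  have -> : hcob B (drop 0 [:: a, b & y]) = B (b :: y) - Ba by [].
  clearbody Ba; rewrite /= !take0 expr0 scale1r.
  by rewrite scalerBl scalerBr addrA addrNK.
rewrite (IH (fun w => A (a :: w))) //.
have -> : hcob A (take q.+3 [:: a, b & y])
          = A (take q.+2 (b :: y)) - hcob (fun w => A (a :: w)) (take q.+2 (b :: y)) by [].
by rewrite exprS mulN1r scaleNr [in RHS]scalerBl opprD addrA.
Qed.
End Linear.
End HomogeneousCochains.

Section GroupSequences.
Variable G : group.
Local Notation "x ** y" := (@gmul G x y) (at level 40, left associativity).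
Local Notation "x ^^-1" := (@ginv G x) (at level 3).
Local Notation e := (gone G).
Implicit Types (x y z h a b : G) (s t w : seq G).

Lemma gmulKg x y : x^^-1 ** (x ** y) = y.
Proof. by rewrite gmulA gmulV gmul1. Qed.

Lemma gmulI x : injective (gmul x).
Proof. by move=> y z E; rewrite -(gmulKg x y) E gmulKg. Qed.

Lemma gmulgV x : x ** x^^-1 = e.
Proof.
rewrite -[LHS]gmul1 -{1}(gmulV (x^^-1)) -gmulA (gmulA (x^^-1) x) gmulV.
by rewrite gmul1 gmulV.
Qed.

Lemma gmulg1 x : x ** e = x.
Proof. by rewrite -(gmulV x) gmulA gmulgV gmul1. Qed.

Lemma gmulKVg x y : x ** (x^^-1 ** y) = y.
Proof. by rewrite gmulA gmulgV gmul1. Qed.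

Lemma ginv1 : e^^-1 = e.
Proof. by rewrite -{2}(gmulV e) gmulg1. Qed.

Lemma ginvM x y : (x ** y)^^-1 = y^^-1 ** x^^-1.
Proof.
apply: (@gmulI (x ** y)).
by rewrite gmulgV -gmulA (gmulA y) gmulgV gmul1 gmulgV.
Qed.

Lemma gquot_mul2l h a b : (h ** a)^^-1 ** (h ** b) = a^^-1 ** b.
Proof. by rewrite ginvM -gmulA gmulKg. Qed.

(* Homogeneous coordinates: (g_1, ..., g_n) based at x becomes
   (x, x g_1, x g_1 g_2, ..., x g_1 ... g_n). *)
Fixpoint homog x s : seq G :=
  if s is g :: t then x :: homog (x ** g) t else [:: x].

Fixpoint inhomog w : seq G :=
  if w is a :: ((b :: _) as w') then a^^-1 ** b :: inhomog w' else [::].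

Lemma size_homog x s : size (homog x s) = (size s).+1.
Proof. by elim: s x => [|g t IH] x //=; rewrite IH. Qed.

Lemma size_inhomog w : size (inhomog w) = (size w).-1.
Proof. by elim: w => [|a [|b w] IH] //=; rewrite IH. Qed.

Lemma head_homog x s : head e (homog x s) = x.
Proof. by case: s. Qed.

Lemma inhomog_homog x s : inhomog (homog x s) = s.
Proof.
elim: s x => [|g t IH] x //=.
by case: t IH => [|g' t] IH /=; rewrite gmulKg // -[in RHS](IH (x ** g)).
Qed.

Lemma homog_inhomog w : w <> [::] -> homog (head e w) (inhomog w) = w.
Proof. by elim: w => [|a [|b w] IH] //= _; rewrite gmulKVg IH. Qed.

Lemma homog_mul h x s : homog (h ** x) s = map (gmul h) (homog x s).
Proof. by elim: s x => [|g t IH] x //=; rewrite -gmulA IH. Qed.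

Lemma inhomog_map_mul h w : inhomog (map (gmul h) w) = inhomog w.
Proof.
by elim: w => [|a [|b w] IH] //=; rewrite gquot_mul2l; congr (_ :: _); exact: IH.
Qed.

Lemma take_homog n x s : take n.+1 (homog x s) = homog x (take n s).
Proof. by elim: n s x => [|n IH] [|g t] x //=; [case: t | rewrite IH]. Qed.

Lemma take_inhomog n w : take n (inhomog w) = inhomog (take n.+1 w).
Proof. by elim: n w => [|n IH] [|a [|b w]] //=; rewrite (IH (b :: w)). Qed.

Lemma drop_inhomog n w : drop n (inhomog w) = inhomog (drop n w).
Proof. by elim: n w => [|n IH] [|a [|b w]] //=; rewrite (IH (b :: w)). Qed.

Lemma head_drop n w : (n < size w)%N ->
  head e (drop n w) = head e w ** gprod (take n (inhomog w)).
Proof.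
elim: n w => [|n IH] [|a [|b w]] //=; rewrite ?gmulg1 // => Hn.
by rewrite (IH (b :: w)) //= gmulA gmulKVg.
Qed.

Lemma face0_homog g t x : face 0 (homog x (g :: t)) = homog (x ** g) t.
Proof. by rewrite /face /= drop0. Qed.

Lemma face_homog_merge i s x : (i.+1 < size s)%N ->
  face i.+1 (homog x s) = homog x (merge_at i s).
Proof.
elim: i s x => [|i IH] [|g [|g' t]] x //= Hi.
  by rewrite /face /merge_at /= !drop0 gmulA.
by have := IH (g' :: t) (x ** g) Hi; rewrite /face /merge_at /= => ->.
Qed.

Lemma face_homog_last g t x :
  face (size t).+1 (homog x (g :: t)) = homog x (take (size t) (g :: t)).
Proof.
elim: t g x => [|g' t IH] g x //=.
by have := IH g' (x ** g); rewrite /face /= => ->.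
Qed.

(* The homogeneous coboundary of P read in inhomogeneous coordinates is the
   standard coboundary [dcob]. *)
Lemma hcob_homog (R : pzRingType) (V : lmodType R) (P : seq G -> V) x g t :
  hcob P (homog x (g :: t)) =
  P (homog (x ** g) t)
  + \sum_(i < size t) (-1) ^+ i.+1 *: P (homog x (merge_at i (g :: t)))
  + (-1) ^+ (size t).+1 *: P (homog x (take (size t) (g :: t))).
Proof.
rewrite hcobE size_homog /= big_ord_recl expr0 scale1r face0_homog.
rewrite big_ord_recr /= addrA; congr (_ + _ + _).
  apply: eq_bigr => i _; rewrite /bump /= add1n.
  by have := @face_homog_merge i (g :: t) x; rewrite /= ltnS => ->.
rewrite /bump leq0n add1n.
by have := face_homog_last g t x => /= ->.
Qed.

End GroupSequences.

Section Shapiro.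
Variables (R : comPzRingType) (G : group) (H : G -> Prop).
Hypothesis subH : is_subgroup H.
Variables (M : lmodType R) (act : G -> M -> M).
Hypothesis actH : is_module_action H act.

Local Notation "x ** y" := (@gmul G x y) (at level 40, left associativity).
Local Notation "x ^^-1" := (@ginv G x) (at level 3).
Local Notation e := (gone G).
Implicit Types (x h g : G) (s t w y z : seq G).

Lemma subH1 : H e. Proof. by case: subH. Qed.
Lemma subHM (x y : G) : H x -> H y -> H (x ** y). Proof. by case: subH => _ P _; apply: P. Qed.
Lemma subHV x : H x -> H (x^^-1). Proof. by case: subH => _ _ P; apply: P. Qed.
Lemma subHMl h x : H h -> H (h ** x) -> H x.
Proof. by move=> Hh Hhx; rewrite -(gmulKg h x); apply: subHM => //; apply: subHV. Qed.

(* A representative of the coset H x, chosen to be 1 on H itself; then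
   x = hpart x ** coset_rep x with hpart x in H. *)
Definition coset_rep x : G :=
  if pselect (H x) then e else epsilon (inhabits e) (fun r => H (x ** r^^-1)).

Definition hpart x : G := x ** (coset_rep x)^^-1.

Lemma coset_rep_mul h x : H h -> coset_rep (h ** x) = coset_rep x.
Proof.
move=> Hh; rewrite /coset_rep.
have -> : (fun r => H (h ** x ** r^^-1)) = (fun r => H (x ** r^^-1)).
  apply: funext => r; apply: propext; rewrite -gmulA.
  by split; [exact: subHMl | exact: subHM].
case: (pselect (H (h ** x))) => [Hhx|Hhx]; case: (pselect (H x)) => [Hx|Hx] //.
- by case: Hx; apply: subHMl Hhx.
- by case: Hhx; apply: subHM.
Qed.

Lemma hpart_mul h x : H h -> hpart (h ** x) = h ** hpart x.
Proof. by move=> Hh; rewrite /hpart coset_rep_mul // gmulA. Qed.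

Lemma hpart_id h : H h -> hpart h = h.
Proof.
move=> Hh; rewrite /hpart /coset_rep.
by destruct (pselect (H h)); rewrite ?ginv1 ?gmulg1.
Qed.

Lemma hpartH x : H (hpart x).
Proof.
rewrite /hpart /coset_rep; destruct (pselect (H x)); first by rewrite ginv1 gmulg1.
apply: (epsilon_spec (inhabits e) (fun r => H (x ** r^^-1))).
by exists x; rewrite gmulgV; exact: subH1.
Qed.

Lemma actD g u v : H g -> act g (u + v) = act g u + act g v.
Proof. by case: actH => lin _ _ Hg; rewrite -[u]scale1r lin // !scale1r. Qed.

Lemma act0 g : H g -> act g 0 = 0.
Proof. by move=> Hg; apply: (@addrI _ (act g 0)); rewrite -actD // !addr0. Qed.

Lemma actZ g a v : H g -> act g (a *: v) = a *: act g v.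
Proof. by case: actH => lin _ _ Hg; rewrite -[a *: v]addr0 lin // act0 // addr0. Qed.

Lemma actN g v : H g -> act g (- v) = - act g v.
Proof. by move=> Hg; rewrite -scaleN1r actZ // scaleN1r. Qed.

Lemma actB g u v : H g -> act g (u - v) = act g u - act g v.
Proof. by move=> Hg; rewrite actD // actN. Qed.

Lemma act1 v : act e v = v. Proof. by case: actH. Qed.

Lemma actM g h v : H g -> H h -> act (g ** h) v = act g (act h v).
Proof. by case: actH => _ _ P; apply: P. Qed.

Lemma act_sum g n (F : 'I_n -> M) : H g ->
  act g (\sum_(i < n) F i) = \sum_(i < n) act g (F i).
Proof.
move=> Hg; elim: n F => [|n IH] F; first by rewrite !big_ord0 act0.
by rewrite !big_ord_recr /= actD // IH.
Qed.

(* The coinduced module Hom_{RH}(RG, M), with G acting by right translation. *)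
Record coind := Coind {
  coval : G -> M;
  covalP : forall h x, H h -> coval (h ** x) = act h (coval x)
}.

Lemma coind_ext (u v : coind) : coval u =1 coval v -> u = v.
Proof.
case: u v => fu Pu [fv Pv] /= /funext E; subst fv.
by congr Coind; apply: Prop_irrelevance.
Qed.

HB.instance Definition _ := gen_eqMixin coind.
HB.instance Definition _ := gen_choiceMixin coind.

Definition coind0 : coind := @Coind (fun=> 0) (fun h x Hh => esym (act0 Hh)).
Program Definition coind_add (u v : coind) : coind :=
  @Coind (fun x => coval u x + coval v x) _.
Next Obligation. by rewrite !covalP // actD. Qed.
Program Definition coind_opp (u : coind) : coind := @Coind (fun x => - coval u x) _.
Next Obligation. by rewrite covalP // actN. Qed.
Program Definition coind_scale (a : R) (u : coind) : coind :=
  @Coind (fun x => a *: coval u x) _.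
Next Obligation. by rewrite covalP // actZ. Qed.

Lemma coind_addA : associative coind_add.
Proof. by move=> u v w; apply: coind_ext => x /=; rewrite addrA. Qed.
Lemma coind_addC : commutative coind_add.
Proof. by move=> u v; apply: coind_ext => x /=; rewrite addrC. Qed.
Lemma coind_add0 : left_id coind0 coind_add.
Proof. by move=> u; apply: coind_ext => x /=; rewrite add0r. Qed.
Lemma coind_addN : left_inverse coind0 coind_opp coind_add.
Proof. by move=> u; apply: coind_ext => x /=; rewrite addNr. Qed.

HB.instance Definition _ :=
  GRing.isZmodule.Build coind coind_addA coind_addC coind_add0 coind_addN.

Lemma coind_scaleA a b u : coind_scale a (coind_scale b u) = coind_scale (a * b) u.
Proof. by apply: coind_ext => x /=; rewrite scalerA. Qed.
Lemma coind_scale1 : left_id 1 coind_scale.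
Proof. by move=> u; apply: coind_ext => x /=; rewrite scale1r. Qed.
Lemma coind_scaleDr : right_distributive coind_scale +%R.
Proof. by move=> a u v; apply: coind_ext => x /=; rewrite scalerDr. Qed.
Lemma coind_scaleDl u : {morph coind_scale^~ u : a b / a + b}.
Proof. by move=> a b; apply: coind_ext => x /=; rewrite scalerDl. Qed.

HB.instance Definition _ := GRing.Zmodule_isLmodule.Build R coind
  coind_scaleA coind_scale1 coind_scaleDr coind_scaleDl.

Lemma covalD (u v : coind) x : coval (u + v) x = coval u x + coval v x.
Proof. by []. Qed.

Lemma coval0 x : coval 0 x = 0.
Proof. by []. Qed.

Lemma coval_sum n (F : 'I_n -> coind) x :
  coval (\sum_(i < n) F i) x = \sum_(i < n) coval (F i) x.
Proof.
elim: n F => [|n IH] F; first by rewrite !big_ord0.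
by rewrite !big_ord_recr covalD IH.
Qed.

Program Definition coact g (u : coind) : coind := @Coind (fun x => coval u (x ** g)) _.
Next Obligation. by rewrite -gmulA covalP. Qed.

Lemma coact_module : is_module_action (@whole G) coact.
Proof.
split=> [g a u v _ | u | g h u _ _]; apply: coind_ext => x //=.
  by rewrite gmulg1.
by rewrite gmulA.
Qed.

Fixpoint allH w : Prop := if w is a :: w' then H a /\ allH w' else True.

Lemma all_inE w : all_in H w <-> allH w.
Proof.
rewrite /all_in; elim: w => [|a w IH] /=; first by split.
split=> [A | [Ha Hw] [|i] Hi] //=.
  by split; [exact: (A 0%N) | apply/IH => i; exact: (A i.+1)].
by move/IH: Hw; apply.
Qed.

Lemma allH_map_hpart w : allH (map hpart w).
Proof. by elim: w => //= a w IH; split=> //; exact: hpartH. Qed.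

Lemma allH_inhomog w : allH w -> allH (inhomog w).
Proof.
elim: w => [|a [|b w] IH] //= [Ha [Hb Hw]].
by split; [apply: subHM => //; apply: subHV | apply: IH].
Qed.

Lemma allH_homog x s : H x -> allH s -> allH (homog x s).
Proof.
elim: s x => [|g t IH] x //= Hx [Hg Ht].
by split=> //; apply: IH => //; apply: subHM.
Qed.

Lemma map_hpart_id w : allH w -> map hpart w = w.
Proof. by elim: w => //= a w IH [Ha Hw]; rewrite hpart_id // IH. Qed.

(* [hform F] is the M-valued homogeneous cochain on G
   attached to the coind-valued inhomogeneous cochain F, and [hlift f] the
   homogeneous cochain on H attached to the M-valued inhomogeneous cochain f. *)
Definition hform (F : seq G -> coind) w : M := coval (F (inhomog w)) (head e w).

Definition hlift (f : seq G -> M) w : M := act (head e w) (f (inhomog w)).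

Lemma hform_homog F x s : hform F (homog x s) = coval (F s) x.
Proof. by rewrite /hform inhomog_homog head_homog. Qed.

Lemma hlift_homog f x s : hlift f (homog x s) = act x (f s).
Proof. by rewrite /hlift inhomog_homog head_homog. Qed.

Lemma coval_dcob F g t x :
  coval (dcob coact F (g :: t)) x = hcob (hform F) (homog x (g :: t)).
Proof.
rewrite hcob_homog !hform_homog /dcob !covalD coval_sum.
by congr (_ + _ + _); apply: eq_bigr => i _; rewrite hform_homog.
Qed.

Lemma hcob_hform F w : (1 < size w)%N ->
  hcob (hform F) w = coval (dcob coact F (inhomog w)) (head e w).
Proof.
case: w => [|a [|b w]] // _.
by rewrite -[in LHS](@homog_inhomog _ [:: a, b & w]) // coval_dcob.
Qed.

Lemma act_dcob f g t x : H x -> allH (g :: t) ->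
  act x (dcob act f (g :: t)) = hcob (hlift f) (homog x (g :: t)).
Proof.
move=> Hx [Hg Ht].
rewrite hcob_homog !hlift_homog /dcob !actD // act_sum // actZ // -actM //.
by congr (_ + _ + _); apply: eq_bigr => i _; rewrite actZ // hlift_homog.
Qed.

Lemma dcob_coval1 (F : seq G -> coind) g t : allH (g :: t) ->
  dcob act (fun s => coval (F s) e) (g :: t) = coval (dcob coact F (g :: t)) e.
Proof.
case=> Hg _; rewrite /dcob !covalD coval_sum /= gmul1.
by rewrite -covalP // gmulg1.
Qed.

Definition equivariant (P : seq G -> M) :=
  forall h x s, H h -> P (homog (h ** x) s) = act h (P (homog x s)).

Definition cochain_of P (EP : equivariant P) s : coind :=
  @Coind (fun x => P (homog x s)) (fun h x Hh => EP h x s Hh).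

Lemma hform_cochain_of P (EP : equivariant P) w : w <> [::] ->
  hform (cochain_of EP) w = P w.
Proof. by move=> nw; rewrite /hform /= homog_inhomog. Qed.

Lemma hform_map_mul F h w : H h -> w <> [::] ->
  hform F (map (gmul h) w) = act h (hform F w).
Proof. by move=> Hh; rewrite /hform inhomog_map_mul; case: w => //= a w _; rewrite covalP. Qed.

Lemma prism_hform_equivariant F : equivariant (prism hpart (hform F)).
Proof.
move=> h x s Hh; rewrite homog_mul.
apply: prism_map => [u v | u | w]; [exact: actB | exact: hpart_mul | exact: hform_map_mul].
Qed.

Lemma hlift_hpart_equivariant f : equivariant (fun w => hlift f (map hpart w)).
Proof.
move=> h x s Hh; rewrite homog_mul -map_comp.
rewrite (eq_map (g := gmul h \o hpart)) => [|u]; last exact: hpart_mul.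
have [w ->] : exists w, homog x s = x :: w by case: s => [|g t]; eexists.
rewrite map_comp /hlift inhomog_map_mul /= actM //; exact: hpartH.
Qed.

Definition coind_lift f : seq G -> coind := cochain_of (hlift_hpart_equivariant f).

Lemma coind_lift1 f s : all_in H s -> coval (coind_lift f s) e = f s.
Proof.
move=> /all_inE Hs /=.
by rewrite map_hpart_id ?hlift_homog ?act1 //; apply: allH_homog => //; exact: subH1.
Qed.

Lemma cocycle_coind_lift i f : cocycle H act i f ->
  cocycle (@whole G) coact i (coind_lift f).
Proof.
move=> cf [|g t] // Hs _; apply: coind_ext => x.
rewrite coval_dcob coval0.
rewrite (@eq_hcob _ _ i.+1 _ (fun w => hlift f (map hpart w))); first last.
- by rewrite inE size_homog Hs.
- by move=> [|a w] //= _; rewrite hform_cochain_of.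
rewrite hcob_map.
set w := map hpart (homog x (g :: t)).
have Hw : allH w := allH_map_hpart _.
have sw : size w = i.+2 by rewrite size_map size_homog Hs.
have nw : w <> [::] by move=> w0; rewrite w0 in sw.
rewrite -(homog_inhomog nw).
case E : (inhomog w) (allH_inhomog Hw) => [|g' t'] Hd.
  by move: (size_inhomog w); rewrite E sw.
have Hhead : H (head e w).
  by rewrite /w; case: (homog _ _) => [|a ?] /=; [exact: subH1 | exact: hpartH].
rewrite -act_dcob // cf ?act0 //; last exact/all_inE.
by rewrite -E size_inhomog sw.
Qed.

Lemma hform_map_hpart n F f y : (0 < n)%N ->
  (forall s, size s = n -> all_in H s -> coval (F s) e = dcob act f s) ->
  size y = n.+1 -> hform F (map hpart y) = hcob (fun w => hlift f (map hpart w)) y.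
Proof.
move=> n_gt0 Ff sy; rewrite hcob_map.
set w := map hpart y.
have Hw : allH w := allH_map_hpart y.
have nw : w <> [::] by move=> w0; move: (congr1 size w0); rewrite size_map sy.
have Hhead : H (head e w).
  by rewrite /w; case: (y) => [|a ?] /=; [exact: subH1 | exact: hpartH].
have sd : size (inhomog w) = n by rewrite size_inhomog size_map sy.
rewrite /hform -[X in coval _ X]gmulg1 covalP // Ff //; last first.
  exact/all_inE/allH_inhomog.
have Hd := allH_inhomog Hw.
case E : (inhomog w) sd Hd => [|g t] sd Hd; first by rewrite -sd in n_gt0.
by rewrite act_dcob // -E homog_inhomog.
Qed.

Lemma shapiro_vanishing j F : (0 < j)%N -> coh_vanishes H act j ->
  cocycle (@whole G) coact j F -> coboundary (@whole G) coact j F.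
Proof.
case: j => [|j] // _ vanj cF.
pose f s := coval (F s) e.
have cf : cocycle H act j.+1 f.
  by move=> [|g t] // Hs /all_inE Hall; rewrite /f dcob_coval1 // cF.
have [f0 df0] := vanj f cf.
have hcob_hformF : {in [pred z | size z == j.+3], hcob (hform F) =1 fun=> 0}.
  move=> z /eqP sz; rewrite hcob_hform ?sz // cF //.
  by rewrite size_inhomog sz.
exists (fun s => cochain_of (prism_hform_equivariant F) s + coind_lift f0 s).
move=> [|g t] // Hs _; apply: coind_ext => x.
set y := homog x (g :: t).
have sy : size y = j.+2 by rewrite size_homog Hs.
rewrite coval_dcob.
rewrite (@eq_hcob _ _ j.+1 _ (fun z => prism hpart (hform F) z + hlift f0 (map hpart z)));
  first last.
- by rewrite inE sy.
- move=> z /eqP sz; have nz : z <> [::] by case: z sz.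
  by rewrite /hform covalD -!/(hform _ z) !hform_cochain_of.
rewrite hcobD -(@hform_map_hpart j.+1 F f0 y) //.
have := hcob_prism hpart (hform F) y.
rewrite (@prism_eq0 _ _ hpart j.+2) ?inE ?sy // addr0 => ->.
by rewrite subrK hform_homog.
Qed.

Lemma dcob_triv (alpha : seq G -> R) g t x :
  dcob (@triv_act R G) alpha (g :: t)
  = hcob (V := R^o) (fun z => alpha (inhomog z)) (homog x (g :: t)).
Proof.
rewrite (hcob_homog (V := R^o)) /dcob /triv_act !inhomog_homog.
by congr (_ + _ + _); apply: eq_bigr => i _; rewrite inhomog_homog.
Qed.

Lemma hform_cup q (alpha : seq G -> R) F z : (q < size z)%N ->
  hform (cup coact q alpha F) z = alpha (inhomog (take q.+1 z)) *: hform F (drop q z).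
Proof. by move=> qz; rewrite /hform /cup -take_inhomog -drop_inhomog head_drop. Qed.

Lemma cocycle_cup q j (alpha : seq G -> R) F :
  cocycle (@whole G) (@triv_act R G) q alpha -> cocycle (@whole G) coact j F ->
  cocycle (@whole G) coact (j + q) (cup coact q alpha F).
Proof.
move=> c_alpha cF [|g t] // Hs _; apply: coind_ext => x.
set y := homog x (g :: t).
have sy : size y = (j + q).+2 by rewrite size_homog Hs.
rewrite coval_dcob coval0.
rewrite (@eq_hcob _ _ (j + q).+1 _
  (fun z => alpha (inhomog (take q.+1 z)) *: hform F (drop q z))); first last.
- by rewrite inE sy.
- by move=> z /eqP sz; rewrite hform_cup // sz ltnS leq_addl.
rewrite (hcob_leibniz (fun z => alpha (inhomog z)) (hform F)); last by rewrite sy !ltnS leq_addl.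
have -> : hcob (V := R^o) (fun z => alpha (inhomog z)) (take q.+2 y) = 0.
  rewrite /y take_homog [take _ _]/= -dcob_triv c_alpha //=.
  by rewrite size_takel //; move: Hs => /= [->]; lia.
rewrite scale0r add0r hcob_hform; last by rewrite size_drop sy; lia.
by rewrite cF ?scaler0 // size_inhomog size_drop sy; lia.
Qed.

Section DimensionShifting.
Variables (q : nat) (alpha : seq G -> R) (k n : nat).
Hypotheses (c_alpha : cocycle (@whole G) (@triv_act R G) q alpha) (q_gt0 : (0 < q)%N).
Hypothesis cup_isoG : forall i, (k < i)%N -> cup_iso coact q alpha i.
Hypothesis cdH : forall i, (n < i)%N -> coh_vanishes H act i.

(* Cupping with alpha raises the degree by q > 0 until it exceeds cd_R(H),
   where Shapiro's lemma kills the class. *)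
Lemma coind_cocycle_coboundary j F : (k < j)%N ->
  cocycle (@whole G) coact j F -> coboundary (@whole G) coact j F.
Proof.
have [m] := ubnP (n.+1 - j); elim: m j F => // m IH j F lt_m k_lt cF.
case: (ltnP n j) => [n_lt | j_le].
  by apply: shapiro_vanishing => //; [lia | exact: cdH].
apply: (cup_isoG k_lt).1 => //; apply: IH; [lia | lia | exact: cocycle_cup].
Qed.

Lemma coh_vanishes_above i : (k < i)%N -> coh_vanishes H act i.
Proof.
case: i => [|i] // k_lt f cf.
have [E dE] := coind_cocycle_coboundary k_lt (cocycle_coind_lift cf).
exists (fun s => coval (E s) e) => -[|g t] // Hs Hall.
by rewrite -coind_lift1 // dE // dcob_coval1 //; exact/all_inE.
Qed.

End DimensionShifting.
End Shapiro.

Theorem lemma2p7 (R : comPzRingType) (G : group) (k : nat) :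
  periodic_from R G k.+1 -> jump_height R G k.
Proof.
move=> [q [alpha [q_gt0 [c_alpha periodicG]]]] H subH [n cdH] M act actH.
apply: (coh_vanishes_above subH (actH := actH) (n := n) c_alpha q_gt0).
- exact: periodicG (coact_module actH).
- exact: cdH.
Qed.
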